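(* Let $A \in \mathbb{R}^{m \times r}$, $b \in \mathbb{R}^m$, $P = \{ x \in \mathbb{R}^r \mid Ax \ge b\}$, let $x \in P$, and let $O \subset \mathbb{R}^r$ be a closed orthant with $x \in O$. Then $x$ is convex-conformally non-decomposable in $P$ if and only if $x$ is a vertex of $P \cap O$.
   Context: For $x \in \mathbb{R}^n$, $\operatorname{sign}(x) \in \{-,0,+\}^n$ is obtained by applying the sign function componentwise; the relations $0<-$, $0<+$ induce a componentwise partial order on $\{-,0,+\}^n$. For $X \in \{-,0,+\}^r$, the corresponding closed orthant is $O = \{ x \in \mathbb{R}^r \mid \operatorname{sign}(x) \le X\}$. A vector $x \in P$ is convex-conformally non-decomposable in $P$ if for all $x^1,x^2 \in P$ with $\operatorname{sign}(x^1),\operatorname{sign}(x^2) \le \operatorname{sign}(x)$ and all $0<\lambda<1$, $x = \lambda x^1 + (1-\lambda)x^2$ implies $x^1 = x^2$. For a polyhedron $Q$, $x \in Q$ is a vertex if for all $x^1, x^2 \in Q$ and $0<\lambda<1$, $x = \lambda x^1 + (1-\lambda) x^2$ implies $x^1 = x^2$. *)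

From HB Require Import structures.
From mathcomp Require Import all_boot all_order all_algebra.
From mathcomp Require Import reals.
Set Implicit Arguments. Unset Strict Implicit. Unset Printing Implicit Defensive.
Import Order.TTheory GRing.Theory Num.Theory.
Local Open Scope ring_scope.

Inductive sgn := SNeg | SZero | SPos.

Definition sgn_le (s t : sgn) : Prop := s = SZero \/ s = t.

Section Defs.
Variable R : realType.

Definition sign_of (x : R) : sgn :=
  if x < 0 then SNeg else if x == 0 then SZero else SPos.

Definition vsign (r : nat) (x : 'cV[R]_r) : 'I_r -> sgn := fun i => sign_of (x i 0).

Definition vsgn_le (r : nat) (S T : 'I_r -> sgn) : Prop := forall i, sgn_le (S i) (T i).

Definition polyhedron (m r : nat) (A : 'M[R]_(m, r)) (b : 'cV[R]_m) (x : 'cV[R]_r) : Prop :=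
  forall i, b i 0 <= (A *m x) i 0.

Definition orthant (r : nat) (X : 'I_r -> sgn) (x : 'cV[R]_r) : Prop :=
  vsgn_le (vsign x) X.

Definition cc_nondecomposable (r : nat) (P : 'cV[R]_r -> Prop) (x : 'cV[R]_r) : Prop :=
  P x /\
  forall (x1 x2 : 'cV[R]_r) (lam : R),
    P x1 -> P x2 -> vsgn_le (vsign x1) (vsign x) -> vsgn_le (vsign x2) (vsign x) ->
    0 < lam -> lam < 1 -> x = lam *: x1 + (1 - lam) *: x2 -> x1 = x2.

Definition is_vertex (r : nat) (Q : 'cV[R]_r -> Prop) (x : 'cV[R]_r) : Prop :=
  Q x /\
  forall (x1 x2 : 'cV[R]_r) (lam : R),
    Q x1 -> Q x2 -> 0 < lam -> lam < 1 -> x = lam *: x1 + (1 - lam) *: x2 -> x1 = x2.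
End Defs.

(* If [x] is a proper convex combination of two points [y1], [y2] of a closed
   orthant, then no coordinate can change sign between [y1] and [x]: a nonzero
   coordinate of [y1] has a strict sign, the matching coordinate of [y2] a weak
   one of the same side, so their combination keeps the strict sign.  Hence
   decompositions within [P ∩ O] are exactly the sign-conformal decompositions
   within [P], since conversely [sign y <= sign x <= X] puts [y] in [O]. *)
From mathcomp Require Import all_boot all_order all_algebra.
From mathcomp Require Import reals.
From mathcomp Require Import lra.
Import Order.TTheory GRing.Theory Num.Theory.
Local Open Scope ring_scope.

Lemma sgn_le_trans (s t u : sgn) : sgn_le s t -> sgn_le t u -> sgn_le s u.
Proof. by case=> ->; [left|]. Qed.

Lemma vsgn_le_trans (r : nat) (S T U : 'I_r -> sgn) :
  vsgn_le S T -> vsgn_le T U -> vsgn_le S U.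
Proof. by move=> ST TU i; apply: sgn_le_trans (ST i) (TU i). Qed.

Section SignOfReal.
Variable R : realType.
Implicit Types a c lam : R.

Lemma sign_of_lt0 a : a < 0 -> sign_of a = SNeg.
Proof. by rewrite /sign_of => ->. Qed.

Lemma sign_of_gt0 a : 0 < a -> sign_of a = SPos.
Proof. by move=> a_gt0; rewrite /sign_of ltNge ltW // gt_eqF. Qed.

Lemma sign_of0 : sign_of (0 : R) = SZero.
Proof. by rewrite /sign_of ltxx eqxx. Qed.

Lemma sign_of_le a (X : sgn) :
  sgn_le (sign_of a) X ->
  match X with SNeg => a <= 0 | SZero => a == 0 | SPos => 0 <= a end.
Proof.
rewrite /sgn_le /sign_of.
case: ltrP => [a_lt0|a_ge0]; last case: eqP => [->|_].
- by case: X => -[] //; rewrite ltW.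
- by case: X; rewrite ?lexx.
- by case: X => -[].
Qed.

Lemma sign_of_le_convex a c lam (X : sgn) :
  sgn_le (sign_of a) X -> sgn_le (sign_of c) X -> 0 < lam -> lam < 1 ->
  sgn_le (sign_of a) (sign_of (lam * a + (1 - lam) * c)).
Proof.
move=> /sign_of_le aX /sign_of_le cX lam_gt0 lam_lt1.
have [->|a_neq0] := eqVneq a 0; first by rewrite sign_of0; left.
right; case: X aX cX => [a_le0 c_le0|a_eq0|a_ge0 c_ge0].
- have a_lt0 : a < 0 by rewrite lt_neqAle a_neq0.
  by rewrite !sign_of_lt0 //; nra.
- by rewrite a_eq0 in a_neq0.
- have a_gt0 : 0 < a by rewrite lt_def a_neq0.
  by rewrite !sign_of_gt0 //; nra.
Qed.

End SignOfReal.

Section ConvexCombination.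
Variables (R : realType) (r : nat).
Implicit Types (y z : 'cV[R]_r) (X : 'I_r -> sgn).

Lemma orthant_convex_vsgn_le X y z (lam : R) :
  orthant X y -> orthant X z -> 0 < lam -> lam < 1 ->
  vsgn_le (vsign y) (vsign (lam *: y + (1 - lam) *: z)).
Proof.
move=> Oy Oz lam_gt0 lam_lt1 i; rewrite /vsign !mxE.
exact: sign_of_le_convex (Oy i) (Oz i) lam_gt0 lam_lt1.
Qed.

Lemma convex_combC y z (lam : R) :
  lam *: y + (1 - lam) *: z = (1 - lam) *: z + (1 - (1 - lam)) *: y.
Proof. by rewrite opprB addrCA subrr addr0 addrC. Qed.

End ConvexCombination.

Theorem proposition6 (R : realType) (m r : nat) (A : 'M[R]_(m, r)) (b : 'cV[R]_m)
    (x : 'cV[R]_r) (X : 'I_r -> sgn) :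
  polyhedron A b x -> orthant X x ->
  (cc_nondecomposable (polyhedron A b) x <->
   is_vertex (fun y => polyhedron A b y /\ orthant X y) x).
Proof.
move=> Px Ox; split=> -[_ nondec]; split=> // x1 x2 lam.
- move=> [P1 O1] [P2 O2] lam_gt0 lam_lt1 x_def.
  have lam'_gt0 : 0 < 1 - lam by rewrite subr_gt0.
  have lam'_lt1 : 1 - lam < 1 by rewrite ltrBlDr ltrDl.
  apply: (nondec x1 x2 lam) => //; rewrite x_def.
    exact: orthant_convex_vsgn_le.
  by rewrite convex_combC; apply: orthant_convex_vsgn_le.
- move=> P1 P2 s1 s2 lam_gt0 lam_lt1 x_def.
  by apply: (nondec x1 x2 lam) => //; split=> //; apply: vsgn_le_trans Ox.
Qed.
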